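(* Let $S$ be a Hausdorff semitopological semigroup and let $(x_n)$, $(y_n)$ be unbounded sequences in $S$. Let $\mu,\nu\in S^*$ with $\nu\in\mathrm{cl}_{S^{Lmc}}\varepsilon(\{x_n:n\in\mathbb{N}\})$ and $\mu\in\mathrm{cl}_{S^{Lmc}}\varepsilon(\{y_n:n\in\mathbb{N}\})$. Then $$\mu\nu\in\mathrm{cl}_{S^{Lmc}}\varepsilon(\{y_kx_n:k<n,\ k,n\in\mathbb{N}\}).$$
   Context: A Hausdorff semitopological semigroup is a semigroup $S$ with a Hausdorff topology such that all maps $\lambda_s(x)=sx$, $r_s(x)=xs$ are continuous. $\mathcal{CB}(S)$: bounded continuous complex functions with sup norm; $\beta S$ its spectrum with Gelfand topology; $L_sf(x)=f(sx)$, $(T_\mu f)(s)=\mu(L_sf)$; $Lmc(S)=\{f\in\mathcal{CB}(S):T_\mu f\in\mathcal{CB}(S)\ \forall \mu\in\beta S\}$. $S^{Lmc}$ is the spectrum of $Lmc(S)$ with the Gelfand topology and multiplication $\mu\nu=\mu\circ T_\nu$, where $(T_\nu f)(s)=\nu(L_sf)$ for $f\in Lmc(S)$; $\varepsilon:S\to S^{Lmc}$ is evaluation, $\varepsilon(s)(f)=f(s)$. $S^*=S^{Lmc}\setminus\varepsilon(S)$. A set $A\subseteq S$ is unbounded if $\mathrm{cl}_{S^{Lmc}}\varepsilon(A)\cap S^*\neq\emptyset$; a sequence $(x_n)$ is unbounded if $\{x_n:n\in\mathbb{N}\}$ is unbounded. *)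

From Stdlib Require Import Reals List.
Open Scope R_scope.

Definition Cplx := (R * R)%type.
Definition C0 : Cplx := (0, 0).
Definition C1 : Cplx := (1, 0).
Definition Cadd (z w : Cplx) : Cplx := (fst z + fst w, snd z + snd w).
Definition Csub (z w : Cplx) : Cplx := (fst z - fst w, snd z - snd w).
Definition Cmul (z w : Cplx) : Cplx :=
  (fst z * fst w - snd z * snd w, fst z * snd w + snd z * fst w).
Definition Cnorm (z : Cplx) : R := sqrt (fst z * fst z + snd z * snd z).

Record HSTSemigroup := {
  car :> Type;
  smul : car -> car -> car;
  smul_assoc : forall a b c, smul a (smul b c) = smul (smul a b) c;
  is_open : (car -> Prop) -> Prop;
  open_full : is_open (fun _ => True);
  open_inter : forall U V, is_open U -> is_open V -> is_open (fun x => U x /\ V x);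
  open_union : forall F : (car -> Prop) -> Prop,
      (forall U, F U -> is_open U) -> is_open (fun x => exists U, F U /\ U x);
  hausdorff : forall x y, x <> y ->
      exists U V, is_open U /\ is_open V /\ U x /\ V y /\ (forall z, ~ (U z /\ V z));
  left_cont : forall s U, is_open U -> is_open (fun x => U (smul s x));
  right_cont : forall s U, is_open U -> is_open (fun x => U (smul x s))
}.

Section Defs.
Variable S : HSTSemigroup.

Definition fadd (f g : S -> Cplx) : S -> Cplx := fun x => Cadd (f x) (g x).
Definition fmul (f g : S -> Cplx) : S -> Cplx := fun x => Cmul (f x) (g x).
Definition fscal (c : Cplx) (f : S -> Cplx) : S -> Cplx := fun x => Cmul c (f x).

Definition continuous_fun (f : S -> Cplx) : Prop :=
  forall x eps, 0 < eps -> exists U, is_open S U /\ U x /\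
    forall y, U y -> Cnorm (Csub (f y) (f x)) < eps.

Definition bounded_fun (f : S -> Cplx) : Prop :=
  exists M, forall x, Cnorm (f x) <= M.

Definition CB (f : S -> Cplx) : Prop := continuous_fun f /\ bounded_fun f.

Definition Lshift (s : S) (f : S -> Cplx) : S -> Cplx := fun x => f (smul S s x).

(** Functionals are represented as maps on all functions; only their values on
    the relevant algebra matter. [is_char A mu]: mu is a nonzero multiplicative
    linear functional on the algebra A (an element of its spectrum). *)
Definition is_char (A : (S -> Cplx) -> Prop) (mu : (S -> Cplx) -> Cplx) : Prop :=
  (forall f g, A f -> A g -> mu (fadd f g) = Cadd (mu f) (mu g)) /\
  (forall c f, A f -> mu (fscal c f) = Cmul c (mu f)) /\
  (forall f g, A f -> A g -> mu (fmul f g) = Cmul (mu f) (mu g)) /\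
  (exists f, A f /\ mu f <> C0).

Definition betaS (mu : (S -> Cplx) -> Cplx) : Prop := is_char CB mu.

Definition Tmu (mu : (S -> Cplx) -> Cplx) (f : S -> Cplx) : S -> Cplx :=
  fun s => mu (Lshift s f).

Definition Lmc (f : S -> Cplx) : Prop :=
  CB f /\ forall mu, betaS mu -> CB (Tmu mu f).

Definition SLmc (mu : (S -> Cplx) -> Cplx) : Prop := is_char Lmc mu.
Definition lmc_prod (mu nu : (S -> Cplx) -> Cplx) : (S -> Cplx) -> Cplx :=
  fun f => mu (Tmu nu f).

Definition evalS (s : S) : (S -> Cplx) -> Cplx := fun f => f s.

Definition Sstar (mu : (S -> Cplx) -> Cplx) : Prop :=
  SLmc mu /\ forall s, ~ (forall f, Lmc f -> mu f = evalS s f).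

(** mu lies in the Gelfand (weak-star) closure of epsilon(A): every basic
    weak-star neighbourhood of mu, given by finitely many f in Lmc(S) and
    eps > 0, meets epsilon(A). *)
Definition in_cl_eps (A : S -> Prop) (mu : (S -> Cplx) -> Cplx) : Prop :=
  forall (fs : list (S -> Cplx)) (eps : R), 0 < eps ->
    (forall f, In f fs -> Lmc f) ->
    exists a, A a /\ forall f, In f fs -> Cnorm (Csub (mu f) (evalS a f)) < eps.

Definition unbounded_set (A : S -> Prop) : Prop :=
  exists mu, Sstar mu /\ in_cl_eps A mu.
Definition seq_range (x : nat -> S) : S -> Prop := fun z => exists n, z = x n.
Definition unbounded_seq (x : nat -> S) : Prop := unbounded_set (seq_range x).

End Defs.

(** Given [f_1, ..., f_m ∈ Lmc(S)] and [eps > 0]: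
    - [T_nu f_i ∈ Lmc(S)], so [mu] is [eps/2]-close to evaluation at some [y_k] on
      the [T_nu f_i]; that is, [mu (T_nu f_i) ≈ T_nu f_i (y_k) = nu (L_{y_k} f_i)];
    - [nu ∈ S^*] is uniformly separated from the finitely many points [x_0..x_k],
      hence lies in the closure of the tail [{x_n : n > k}]: for some [n > k],
      [nu (L_{y_k} f_i) ≈ L_{y_k} f_i (x_n) = f_i (y_k x_n)].
    The substantial ingredient is [T_nu (Lmc(S)) ⊆ Lmc(S)].  It is proved by
    writing functionals as limits along ultrafilters on [S]: [nu] (which lies in
    the closure of [ε(S)]) and every character of [CB(S)] (evaluations are dense
    in [βS], because functions bounded away from zero are invertible in [CB(S)])
    are such limits, and an iterated limit along two ultrafilters is a limit
    along their product, which is again a character of [CB(S)]. *)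

From Pilot Require Import Defs.
From Stdlib Require Import Reals List Lra Lia Classical ClassicalEpsilon FunctionalExtensionality.
From Coquelicot Require Import Complex.
From mathcomp Require filter.
Open Scope R_scope.

Ltac to_C :=
  change (@eq Cplx) with (@eq C) in *; change Cadd with Cplus in *;
  change Csub with Cminus in *; change Cmul with Cmult in *;
  change Defs.C0 with (RtoC 0) in *; change Defs.C1 with (RtoC 1) in *.

Lemma Cnorm_Cmod (z : C) : Cnorm z = Cmod z.
Proof. unfold Cnorm, Cmod; f_equal; simpl; ring. Qed.

Lemma Cnorm_nonneg (z : C) : 0 <= Cnorm z.
Proof. rewrite Cnorm_Cmod; apply Cmod_ge_0. Qed.

Lemma Cnorm_triangle (a b : C) : Cnorm (a + b)%C <= Cnorm a + Cnorm b.
Proof. rewrite !Cnorm_Cmod; apply Cmod_triangle. Qed.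

Lemma Cnorm_mult (a b : C) : Cnorm (a * b)%C = Cnorm a * Cnorm b.
Proof. rewrite !Cnorm_Cmod; apply Cmod_mult. Qed.

Lemma Cnorm_RtoC (r : R) : Cnorm (RtoC r) = Rabs r.
Proof. rewrite Cnorm_Cmod; apply Cmod_R. Qed.

Lemma Cnorm_dist_sym (a b : C) : Cnorm (a - b)%C = Cnorm (b - a)%C.
Proof. rewrite !Cnorm_Cmod, <- Cmod_opp; f_equal; ring. Qed.

Lemma Cnorm_dist_self (a : C) : Cnorm (a - a)%C = 0.
Proof. rewrite Cnorm_Cmod, <- Cmod_0; f_equal; ring. Qed.

Lemma Cnorm_dist_triangle (a b c : C) :
  Cnorm (a - c)%C <= Cnorm (a - b)%C + Cnorm (b - c)%C.
Proof. replace (a - c)%C with ((a - b) + (b - c))%C by ring; apply Cnorm_triangle. Qed.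

Lemma Cnorm_dist_eq0 (a b : C) : Cnorm (a - b)%C = 0 -> a = b.
Proof.
  rewrite Cnorm_Cmod; intros H; apply Cmod_eq_0 in H.
  replace a with ((a - b) + b)%C by ring; rewrite H; ring.
Qed.

Lemma Cnorm_le_coords (z : C) : Cnorm z <= Rabs (fst z) + Rabs (snd z).
Proof.
  destruct z as [a b]; unfold Cnorm; simpl.
  pose proof (Rabs_pos a); pose proof (Rabs_pos b).
  rewrite <- (sqrt_square (Rabs a + Rabs b)) by lra.
  apply sqrt_le_1_alt.
  pose proof (Rsqr_abs a) as Ea; pose proof (Rsqr_abs b) as Eb; unfold Rsqr in Ea, Eb.
  nra.
Qed.

Lemma coords_le_Cnorm (z : C) : Rabs (fst z) <= Cnorm z /\ Rabs (snd z) <= Cnorm z.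
Proof.
  rewrite Cnorm_Cmod; pose proof (Rmax_Cmod z).
  split; eapply Rle_trans; eauto; [apply Rmax_l | apply Rmax_r].
Qed.

(** * Filters, ultrafilters and limits of bounded complex functions *)

Section Filters.
Variable T : Type.
Implicit Types (F U : (T -> Prop) -> Prop) (A B : T -> Prop).

Record is_filter F : Prop := {
  filter_true : F (fun _ => True);
  filter_mono : forall A B, (forall x, A x -> B x) -> F A -> F B;
  filter_and : forall A B, F A -> F B -> F (fun x => A x /\ B x) }.

Record is_ultrafilter U : Prop := {
  ultra_filter : is_filter U;
  ultra_inhabited : forall A, U A -> exists x, A x;
  ultra_decides : forall A, U A \/ U (fun x => ~ A x) }.

Lemma filter_combine F A B (P : T -> Prop) :
  is_filter F -> F A -> F B -> (forall x, A x -> B x -> P x) -> F P.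
Proof.
  intros HF HA HB HP; apply (filter_mono F HF (fun x => A x /\ B x)).
  - intros x [Ax Bx]; auto.
  - apply filter_and; auto.
Qed.

Lemma ultrafilter_of_base (I : Type) (D : I -> Prop) (Bs : I -> T -> Prop) :
  (exists i, D i) ->
  (forall i, D i -> exists x, Bs i x) ->
  (forall i j, D i -> D j -> exists k, D k /\ forall x, Bs k x -> Bs i x /\ Bs j x) ->
  exists U, is_ultrafilter U /\ forall i, D i -> U (Bs i).
Proof.
  intros Hne Hinh Hdir.
  assert (Hbase : filter.Filter (filter.filter_from D Bs)).
  { apply filter.filter_from_filter; auto.
    intros i j Di Dj; destruct (Hdir i j Di Dj) as [k [Dk Hk]]; exists k; auto. }
  assert (Hproper : filter.ProperFilter (filter.filter_from D Bs))
    by (apply filter.filter_from_proper; auto).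
  destruct (filter.ultraFilterLemma Hproper) as [G [HG HsubG]].
  exists G; split.
  - constructor.
    + constructor.
      * exact filter.filterT.
      * intros A B HAB HA; exact (filter.filterS HAB HA).
      * intros A B HA HB; exact (filter.filterI HA HB).
    + intros A HA; exact (filter.filter_ex HA).
    + intros A; exact (filter.in_ultra_setVsetC A HG).
  - intros i Di; apply HsubG; exists i; [exact Di | intros x Hx; exact Hx].
Qed.

Definition tends F (h : T -> C) (z : C) : Prop :=
  forall d, 0 < d -> F (fun x => Cnorm (h x - z)%C < d).

Lemma tends_const F (c : C) : is_filter F -> tends F (fun _ => c) c.
Proof.
  intros HF d Hd; apply (filter_mono F HF (fun _ => True)); [|apply filter_true; auto].
  intros x _; rewrite Cnorm_dist_self; exact Hd.
Qed.

Lemma tends_plus F h g a b : is_filter F -> tends F h a -> tends F g b ->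
  tends F (fun x => h x + g x)%C (a + b)%C.
Proof.
  intros HF Ha Hb d Hd.
  apply (filter_combine F _ _ _ HF (Ha (d / 2) ltac:(lra)) (Hb (d / 2) ltac:(lra))).
  intros x H1 H2.
  replace (h x + g x - (a + b))%C with ((h x - a) + (g x - b))%C by ring.
  eapply Rle_lt_trans; [apply Cnorm_triangle | lra].
Qed.

Lemma tends_mult F h g a b : is_filter F -> tends F h a -> tends F g b ->
  tends F (fun x => h x * g x)%C (a * b)%C.
Proof.
  intros HF Ha Hb d Hd.
  pose proof (Cnorm_nonneg a); pose proof (Cnorm_nonneg b).
  set (K := Cnorm a + Cnorm b + 1).
  set (e := Rmin 1 (d / K)).
  assert (He : 0 < e) by (apply Rmin_pos; [lra | apply Rdiv_lt_0_compat; unfold K; lra]).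
  assert (He1 : e <= 1) by apply Rmin_l.
  assert (HeK : e * K <= d).
  { replace d with (d / K * K) by (field; unfold K; lra).
    apply Rmult_le_compat_r; [unfold K; lra | apply Rmin_r]. }
  apply (filter_combine F _ _ _ HF (Ha e He) (Hb e He)); intros x H1 H2.
  replace (h x * g x - a * b)%C
    with ((h x - a) * (g x - b) + a * (g x - b) + (h x - a) * b)%C by ring.
  eapply Rle_lt_trans; [apply Cnorm_triangle|].
  eapply Rle_lt_trans; [apply Rplus_le_compat_r, Cnorm_triangle|].
  rewrite !Cnorm_mult.
  pose proof (Cnorm_nonneg (h x - a)); pose proof (Cnorm_nonneg (g x - b)).
  unfold K in HeK; nra.
Qed.

Lemma tends_conj F h a : is_filter F -> tends F h a ->
  tends F (fun x => Cconj (h x)) (Cconj a).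
Proof.
  intros HF Ha d Hd; apply (filter_mono F HF _ _) with (2 := Ha d Hd); intros x Hx.
  rewrite <- Cminus_conj, Cnorm_Cmod, Cmod_conj, <- Cnorm_Cmod; exact Hx.
Qed.
End Filters.

Arguments filter_mono {T F}. Arguments filter_and {T F}. Arguments filter_true {T F}.
Arguments ultra_inhabited {T U}. Arguments ultra_decides {T U}.

Section UltraLimits.
Variables (T : Type) (U : (T -> Prop) -> Prop).
Hypothesis HU : is_ultrafilter T U.

Let HF : is_filter T U := ultra_filter T U HU.

Lemma tends_unique h z1 z2 : tends T U h z1 -> tends T U h z2 -> z1 = z2.
Proof.
  intros H1 H2; apply Cnorm_dist_eq0.
  apply Rle_antisym; [|apply Cnorm_nonneg]; apply Rnot_lt_le; intros Hpos.
  set (e := Cnorm (z1 - z2)%C / 2).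
  assert (He : 0 < e) by (unfold e; lra).
  destruct (ultra_inhabited HU _ (filter_and HF _ _ (H1 e He) (H2 e He))) as [x [Hx1 Hx2]].
  pose proof (Cnorm_dist_triangle z1 (h x) z2) as Htri.
  rewrite Cnorm_dist_sym in Hx1; unfold e in *; lra.
Qed.

Lemma tends_bound h z M : tends T U h z -> (forall x, Cnorm (h x) <= M) -> Cnorm z <= M.
Proof.
  intros Hz HM; apply Rnot_lt_le; intros Hlt.
  destruct (ultra_inhabited HU _ (Hz (Cnorm z - M) ltac:(lra))) as [x Hx].
  pose proof (Cnorm_dist_triangle z (h x) 0) as Htri; pose proof (HM x).
  replace (z - 0)%C with z in Htri by ring; replace (h x - 0)%C with (h x) in Htri by ring.
  rewrite Cnorm_dist_sym in Hx; lra.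
Qed.

(** The limit of a bounded real function is the supremum of the reals [r]
    such that eventually [r < g]. *)
Lemma real_ultralimit_exists (g : T -> R) M : (forall x, Rabs (g x) <= M) ->
  exists L, forall d, 0 < d -> U (fun x => Rabs (g x - L) < d).
Proof.
  intros HM.
  set (E := fun r => U (fun x => r < g x)).
  assert (Ebound : bound E).
  { exists M; intros r Er; destruct (ultra_inhabited HU _ Er) as [x Hx].
    pose proof (HM x); pose proof (Rle_abs (g x)); lra. }
  assert (Einhabited : exists r, E r).
  { exists (- M - 1); apply (filter_mono HF (fun _ => True)); [|apply filter_true; exact HF].
    intros x _; pose proof (HM x); pose proof (Rabs_Ropp (g x)); pose proof (Rle_abs (- g x)); lra. }
  destruct (completeness E Ebound Einhabited) as [L [Hub Hleast]].
  exists L; intros d Hd.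
  assert (Hbelow : U (fun x => L - d < g x)).
  { apply NNPP; intros Hno.
    assert (L <= L - d) by (apply Hleast; intros r Er; apply Rnot_lt_le; intros Hr;
      apply Hno; apply (filter_mono HF _ _) with (2 := Er); intros x Hx; lra).
    lra. }
  assert (Habove : U (fun x => ~ L + d / 2 < g x)).
  { destruct (ultra_decides HU (fun x => L + d / 2 < g x)) as [H|H]; auto.
    pose proof (Hub _ H); lra. }
  apply (filter_combine T U _ _ _ HF Hbelow Habove); intros x H1 H2.
  apply Rnot_lt_le in H2; apply Rabs_def1; lra.
Qed.

Lemma ultralimit_exists h M : (forall x, Cnorm (h x) <= M) -> exists z, tends T U h z.
Proof.
  intros HM.
  destruct (real_ultralimit_exists (fun x => fst (h x)) M) as [a Ha].
  { intros x; eapply Rle_trans; [apply coords_le_Cnorm | apply HM]. }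
  destruct (real_ultralimit_exists (fun x => snd (h x)) M) as [b Hb].
  { intros x; eapply Rle_trans; [apply coords_le_Cnorm | apply HM]. }
  exists (a, b); intros d Hd.
  apply (filter_combine T U _ _ _ HF (Ha (d / 2) ltac:(lra)) (Hb (d / 2) ltac:(lra))).
  intros x H1 H2; eapply Rle_lt_trans; [apply Cnorm_le_coords | simpl; unfold Rminus in *; lra].
Qed.
End UltraLimits.

(** [ulim U h]: the limit of [h] along [U] (meaningful for bounded [h]). *)
Definition ulim {T : Type} (U : (T -> Prop) -> Prop) (h : T -> C) : C :=
  @epsilon C (inhabits (RtoC 0)) (tends T U h).

Lemma ulim_tends {T} U (h : T -> C) M : is_ultrafilter T U ->
  (forall x, Cnorm (h x) <= M) -> tends T U h (ulim U h).
Proof. intros HU HM; unfold ulim; apply epsilon_spec; eapply ultralimit_exists; eauto. Qed.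

Lemma ulim_eq {T} U (h : T -> C) z : is_ultrafilter T U -> tends T U h z -> ulim U h = z.
Proof.
  intros HU Hz; apply (tends_unique T U HU h); [|exact Hz].
  unfold ulim; apply epsilon_spec; exists z; exact Hz.
Qed.

Definition product_filter {T : Type} (m : T -> T -> T) (U' U : (T -> Prop) -> Prop)
  : (T -> Prop) -> Prop :=
  fun A => U' (fun a => U (fun t => A (m a t))).

Lemma product_ultrafilter {T} (m : T -> T -> T) U' U :
  is_ultrafilter T U' -> is_ultrafilter T U -> is_ultrafilter T (product_filter m U' U).
Proof.
  intros HU' HU; pose proof (ultra_filter T U' HU') as HF'; pose proof (ultra_filter T U HU) as HF.
  unfold product_filter; constructor; [constructor|..].
  - apply (filter_mono HF' (fun _ => True)); [intros; exact (filter_true HF) | exact (filter_true HF')].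
  - intros A B HAB; apply filter_mono; auto; intros a; apply filter_mono; auto.
  - intros A B HA HB; apply (filter_combine T U' _ _ _ HF' HA HB); intros a Ha Hb.
    apply filter_and; auto.
  - intros A HA; destruct (ultra_inhabited HU' _ HA) as [a Ha].
    destruct (ultra_inhabited HU _ Ha) as [t Ht]; eauto.
  - intros A; destruct (ultra_decides HU' (fun a => U (fun t => A (m a t)))) as [H|H]; [left; auto|right].
    apply (filter_mono HF' _ _) with (2 := H); intros a Ha.
    destruct (ultra_decides HU (fun t => A (m a t))); tauto.
Qed.

Lemma ulim_product {T} (m : T -> T -> T) U' U (h : T -> C) M :
  is_ultrafilter T U' -> is_ultrafilter T U -> (forall x, Cnorm (h x) <= M) ->
  ulim U' (fun a => ulim U (fun t => h (m a t))) = ulim (product_filter m U' U) h.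
Proof.
  intros HU' HU HM.
  set (k := fun a => ulim U (fun t => h (m a t))).
  assert (Hk : forall a, tends T U (fun t => h (m a t)) (k a)) by (intros a; eapply ulim_tends; eauto).
  assert (Hkz : tends T U' k (ulim U' k)).
  { apply ulim_tends with M; auto; intros a; eapply tends_bound; eauto. }
  symmetry; apply ulim_eq; [apply product_ultrafilter; auto|].
  intros d Hd; unfold product_filter.
  apply (filter_mono (ultra_filter T U' HU') _ _) with (2 := Hkz (d / 2) ltac:(lra)); intros a Ha.
  apply (filter_mono (ultra_filter T U HU) _ _) with (2 := Hk a (d / 2) ltac:(lra)); intros t Ht.
  pose proof (Cnorm_dist_triangle (h (m a t)) (k a) (ulim U' k)); lra.
Qed.

Section BoundedContinuous.
Variable S : HSTSemigroup.

Definition nbhd (x : S) (A : S -> Prop) : Prop :=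
  exists V, is_open S V /\ V x /\ forall y, V y -> A y.

Lemma nbhd_filter x : is_filter S (nbhd x).
Proof.
  constructor.
  - exists (fun _ => True); repeat split; auto using open_full.
  - intros A B HAB [V [HV [Vx HVA]]]; exists V; auto.
  - intros A B [V [HV [Vx HVA]]] [W [HW [Wx HWB]]].
    exists (fun y => V y /\ W y); repeat split; auto using open_inter; firstorder.
Qed.

Lemma CB_intro (f : S -> C) : (forall x, tends S (nbhd x) f (f x)) ->
  (exists M, forall x, Cnorm (f x) <= M) -> CB S f.
Proof. intros Hc Hb; split; [exact Hc | exact Hb]. Qed.

Lemma CB_tends (f : S -> C) x : CB S f -> tends S (nbhd x) f (f x).
Proof. intros [Hc _]; exact (Hc x). Qed.

Lemma CB_const (c : C) : CB S (fun _ => c).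
Proof.
  apply CB_intro; [intros x; apply tends_const, nbhd_filter|].
  exists (Cnorm c); intros; lra.
Qed.

Lemma CB_plus f g : CB S f -> CB S g -> CB S (fadd S f g).
Proof.
  intros Hf Hg; apply CB_intro.
  - intros x; apply tends_plus; auto using nbhd_filter, CB_tends.
  - destruct Hf as [_ [M1 H1]], Hg as [_ [M2 H2]]; exists (M1 + M2); intros x.
    eapply Rle_trans; [apply Cnorm_triangle|]; specialize (H1 x); specialize (H2 x); lra.
Qed.

Lemma CB_mult f g : CB S f -> CB S g -> CB S (fmul S f g).
Proof.
  intros Hf Hg; apply CB_intro.
  - intros x; apply tends_mult; auto using nbhd_filter, CB_tends.
  - destruct Hf as [_ [M1 H1]], Hg as [_ [M2 H2]]; exists (M1 * M2); intros x.
    unfold fmul; rewrite Cnorm_mult; apply Rmult_le_compat; auto using Cnorm_nonneg.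
Qed.

Lemma CB_conj f : CB S f -> CB S (fun x => Cconj (f x)).
Proof.
  intros Hf; apply CB_intro.
  - intros x; apply tends_conj; auto using nbhd_filter, CB_tends.
  - destruct Hf as [_ [M HM]]; exists M; intros x.
    rewrite Cnorm_Cmod, Cmod_conj, <- Cnorm_Cmod; apply HM.
Qed.

(** A function of [CB(S)] bounded away from [0] is invertible in [CB(S)]:
    [|1/a - 1/b| = |b - a| / (|a| |b|) <= |b - a| / q^2]. *)
Lemma CB_inv f q : 0 < q -> (forall x, q <= Cnorm (f x)) -> CB S f ->
  CB S (fun x => / f x)%C.
Proof.
  intros Hq Hfq Hf.
  assert (Hnz : forall x, f x <> RtoC 0).
  { intros x E; specialize (Hfq x); rewrite E, Cnorm_RtoC, Rabs_R0 in Hfq; lra. }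
  assert (Hinv : forall x, Cnorm (/ f x)%C <= / q).
  { intros x; rewrite Cnorm_Cmod, Cmod_inv, <- Cnorm_Cmod by auto.
    apply Rinv_le_contravar; auto. }
  apply CB_intro; [|exists (/ q); exact Hinv].
  intros x eps Heps.
  apply (filter_mono (nbhd_filter x) _ _) with (2 := CB_tends f x Hf (eps * q * q)
    (Rmult_lt_0_compat _ _ (Rmult_lt_0_compat _ _ Heps Hq) Hq)).
  intros y Hy.
  replace (/ f y - / f x)%C with ((f x - f y) * (/ f y * / f x))%C by (field; auto).
  rewrite Cnorm_mult, Cnorm_mult, Cnorm_dist_sym.
  assert (Hiq : 0 < / q * / q) by (apply Rmult_lt_0_compat; apply Rinv_0_lt_compat; lra).
  apply Rle_lt_trans with (Cnorm (f y - f x)%C * (/ q * / q)).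
  - apply Rmult_le_compat_l; [apply Cnorm_nonneg|].
    apply Rmult_le_compat; auto using Cnorm_nonneg.
  - replace eps with (eps * q * q * (/ q * / q)) by (field; lra).
    apply Rmult_lt_compat_r; auto.
Qed.

Lemma Lshift_Lshift s t f : Lshift S t (Lshift S s f) = Lshift S (smul S s t) f.
Proof. apply functional_extensionality; intros x; unfold Lshift; rewrite smul_assoc; reflexivity. Qed.

Lemma CB_Lshift s f : CB S f -> CB S (Lshift S s f).
Proof.
  intros [Hc [M HM]]; split; [|exists M; intros; apply HM].
  intros x eps Heps; destruct (Hc (smul S s x) eps Heps) as [V [HV [Vx HVf]]].
  exists (fun y => V (smul S s y)); repeat split; auto using left_cont.
  intros y Hy; exact (HVf _ Hy).
Qed.

Lemma Lshift_Tmu s mu f : Lshift S s (Tmu S mu f) = Tmu S mu (Lshift S s f).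
Proof.
  apply functional_extensionality; intros t; unfold Tmu, Lshift at 1.
  rewrite Lshift_Lshift; reflexivity.
Qed.

Lemma Lmc_Lshift s f : Lmc S f -> Lmc S (Lshift S s f).
Proof.
  intros [Hf HT]; split; [apply CB_Lshift; auto|].
  intros rho Hrho; rewrite <- Lshift_Tmu; apply CB_Lshift; auto.
Qed.
End BoundedContinuous.

(** * Characters of [CB(S)] are limits along ultrafilters *)

Section Characters.
Variable S : HSTSemigroup.

Definition approximable (Q : (S -> C) -> Prop) (A : S -> Prop) (phi : (S -> C) -> C) : Prop :=
  forall fs eps, 0 < eps -> (forall f, In f fs -> Q f) ->
  exists a, A a /\ forall f, In f fs -> Cnorm (phi f - f a)%C < eps.

Lemma in_cl_eps_approximable A mu : in_cl_eps S A mu <-> approximable (Lmc S) A mu.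
Proof. split; intros H; exact H. Qed.

Lemma char_const rho c : betaS S rho -> rho (fun _ => c) = c.
Proof.
  intros (Hadd & Hscal & Hmul & f & Hf & Hnz).
  assert (Hone : rho (fun _ => RtoC 1) = RtoC 1).
  { assert (E : fmul S f (fun _ => RtoC 1) = f).
    { apply functional_extensionality; intros x; unfold fmul; to_C; ring. }
    pose proof (Hmul f _ Hf (CB_const S (RtoC 1))) as H; rewrite E in H.
    to_C.
    replace (rho (fun _ => RtoC 1)) with (rho f * rho (fun _ => RtoC 1) / rho f)%C
      by (field; exact Hnz).
    rewrite <- H; field; exact Hnz. }
  replace (fun _ : S => c) with (fscal S c (fun _ => RtoC 1)).
  - rewrite Hscal, Hone by apply CB_const; to_C; ring.
  - apply functional_extensionality; intros x; unfold fscal; to_C; ring.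
Qed.

Lemma ulim_betaS U : is_ultrafilter S U -> betaS S (ulim U).
Proof.
  intros HU; pose proof (ultra_filter S U HU) as HF.
  assert (Hlim : forall f, CB S f -> tends S U f (ulim U f))
    by (intros f [_ [M HM]]; eapply ulim_tends; eauto).
  split; [|split; [|split]].
  - intros f g Hf Hg; apply ulim_eq; auto; apply tends_plus; auto.
  - intros c f Hf; apply ulim_eq; auto; apply tends_mult; auto using tends_const.
  - intros f g Hf Hg; apply ulim_eq; auto; apply tends_mult; auto.
  - exists (fun _ => RtoC 1); split; [apply CB_const|].
    rewrite (ulim_eq U _ (RtoC 1) HU (tends_const S U _ HF)); exact C1_nz.
Qed.

(** Conversely, a functional approximable by evaluations is a limit along an
    ultrafilter: the sets of points approximating it form a filter base. *)
Lemma approximable_ultralimit Q A phi : approximable Q A phi ->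
  exists U, is_ultrafilter S U /\ forall h, Q h -> tends S U h (phi h).
Proof.
  intros Happ.
  destruct (ultrafilter_of_base S (list (S -> C) * R)
              (fun i => 0 < snd i /\ forall f, In f (fst i) -> Q f)
              (fun i x => forall f, In f (fst i) -> Cnorm (phi f - f x)%C < snd i))
    as [U [HU HbaseU]].
  - exists (nil, 1); simpl; split; [lra | tauto].
  - intros [fs d] [Hd Hfs]; destruct (Happ fs d Hd Hfs) as [a [_ Ha]]; eauto.
  - intros [fs1 d1] [fs2 d2] [Hd1 Hfs1] [Hd2 Hfs2]; exists (fs1 ++ fs2, Rmin d1 d2); simpl.
    split; [split|].
    + apply Rmin_pos; auto.
    + intros f Hf; apply in_app_or in Hf; destruct Hf; auto.
    + intros x Hx; split; intros f Hf; eapply Rlt_le_trans;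
        [apply Hx, in_or_app; auto | apply Rmin_l | apply Hx, in_or_app; auto | apply Rmin_r].
  - exists U; split; auto; intros h Qh d Hd.
    assert (Hbase : 0 < snd (h :: nil, d) /\ forall f, In f (fst (h :: nil, d)) -> Q f)
      by (simpl; split; [auto | intros f [<- | []]; auto]).
    apply (filter_mono (ultra_filter S U HU) _ _) with (2 := HbaseU _ Hbase).
    intros x Hx; rewrite Cnorm_dist_sym; apply Hx; left; reflexivity.
Qed.
End Characters.

(** * Evaluations are dense in [βS]

    If a character [rho] of [CB(S)] stayed [eps]-far from every evaluation on
    the functions [fs], then [G = Σ_{h ∈ fs} |h - rho h|^2] would be a function of
    [CB(S)] with [G >= eps^2] and [rho G = 0]; but then [1/G ∈ CB(S)] and
    [1 = rho (G * 1/G) = rho G * rho (1/G) = 0]. *)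

Section Density.
Variables (S : HSTSemigroup) (rho : (S -> C) -> C).
Hypothesis Hrho : betaS S rho.

Definition sq_dist (h : S -> C) (x : S) : R := Cmod (h x - rho h)%C ^ 2.

Definition sum_sq_dist (hs : list (S -> C)) (x : S) : R :=
  fold_right Rplus 0 (map (fun h => sq_dist h x) hs).

(** [|h - rho h|^2 = (h - rho h) * conj (h - rho h)] lies in [CB(S)] and in the kernel of [rho]. *)
Lemma sq_dist_CB h : CB S h ->
  CB S (fun x => RtoC (sq_dist h x)) /\ rho (fun x => RtoC (sq_dist h x)) = RtoC 0.
Proof.
  intros Hh; pose proof Hrho as (Hadd & _ & Hmul & _).
  set (dh := fadd S h (fun _ => (- rho h)%C)).
  assert (Hdh : CB S dh) by (apply CB_plus; auto using CB_const).
  assert (Hrho_dh : rho dh = RtoC 0).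
  { unfold dh; rewrite Hadd, char_const by auto using CB_const; to_C; ring. }
  assert (E : (fun x => RtoC (sq_dist h x)) = fmul S dh (fun x => Cconj (dh x))).
  { apply functional_extensionality; intros x; unfold sq_dist; rewrite Cmod2_conj; reflexivity. }
  rewrite E; split; [apply CB_mult; auto using CB_conj|].
  rewrite Hmul, Hrho_dh by auto using CB_conj; to_C; ring.
Qed.

Lemma sum_sq_dist_CB hs : (forall h, In h hs -> CB S h) ->
  CB S (fun x => RtoC (sum_sq_dist hs x)) /\ rho (fun x => RtoC (sum_sq_dist hs x)) = RtoC 0.
Proof.
  pose proof Hrho as (Hadd & _).
  induction hs as [|h hs IH]; intros Hhs.
  - unfold sum_sq_dist; simpl; split; [apply CB_const | apply char_const; exact Hrho].
  - destruct IH as [HG HrG]; [intros g Hg; apply Hhs; right; exact Hg|].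
    destruct (sq_dist_CB h) as [Hh Hrh]; [apply Hhs; left; reflexivity|].
    assert (E : (fun x => RtoC (sum_sq_dist (h :: hs) x))
                = fadd S (fun x => RtoC (sq_dist h x)) (fun x => RtoC (sum_sq_dist hs x))).
    { apply functional_extensionality; intros x; unfold sum_sq_dist; simpl; apply RtoC_plus. }
    rewrite E; split; [apply CB_plus; auto|].
    rewrite Hadd, Hrh, HrG by auto; to_C; ring.
Qed.

Lemma sum_sq_dist_ge hs h x : In h hs -> sq_dist h x <= sum_sq_dist hs x.
Proof.
  assert (Hnonneg : forall g, 0 <= sq_dist g x) by (intros g; apply pow2_ge_0).
  assert (Hsum : forall l, 0 <= sum_sq_dist l x).
  { induction l as [|g l IH]; unfold sum_sq_dist in *; simpl; [lra|].
    specialize (Hnonneg g); lra. }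
  induction hs as [|g hs IH]; [intros []|]; intros [<- | Hin]; unfold sum_sq_dist in *; simpl.
  - specialize (Hsum hs); lra.
  - specialize (IH Hin); specialize (Hnonneg g); lra.
Qed.

Theorem betaS_approximable : approximable S (CB S) (fun _ => True) rho.
Proof.
  intros fs eps Heps Hfs; apply NNPP; intros Hno.
  assert (Hfar : forall x, eps ^ 2 <= sum_sq_dist fs x).
  { intros x.
    destruct (classic (exists h, In h fs /\ eps <= Cnorm (rho h - h x)%C)) as [[h [Hin Hh]] | Hnone].
    - eapply Rle_trans; [|apply sum_sq_dist_ge, Hin].
      rewrite Cnorm_dist_sym, Cnorm_Cmod in Hh; apply pow_incr; lra.
    - exfalso; apply Hno; exists x; split; [exact I|].
      intros h Hin; apply Rnot_le_lt; intros Hle; apply Hnone; eauto. }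
  destruct (sum_sq_dist_CB fs Hfs) as [HG HrG].
  set (G := fun x => RtoC (sum_sq_dist fs x)) in *.
  assert (Heps2 : 0 < eps ^ 2) by (apply pow_lt; exact Heps).
  assert (HGnorm : forall x, eps ^ 2 <= Cnorm (G x)).
  { intros x; unfold G; rewrite Cnorm_RtoC, Rabs_right; [apply Hfar|].
    specialize (Hfar x); lra. }
  assert (HG1 : fmul S G (fun x => / G x)%C = (fun _ => RtoC 1)).
  { apply functional_extensionality; intros x; unfold fmul; to_C; field.
    intros E0; specialize (HGnorm x); rewrite E0, Cnorm_RtoC, Rabs_R0 in HGnorm; lra. }
  pose proof Hrho as (_ & _ & Hmul & _).
  pose proof (char_const S rho (RtoC 1) Hrho) as Hone.
  rewrite <- HG1, Hmul, HrG in Hone by (auto; apply (CB_inv S G (eps ^ 2)); auto).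
  to_C; rewrite Cmult_0_l in Hone; apply C1_nz; symmetry; exact Hone.
Qed.
End Density.

(** * [T_nu] preserves [Lmc(S)]

    Write [nu] and a character [rho] of [CB(S)] as limits along ultrafilters
    [U] and [U'].  Then [T_rho (T_nu f)] is [T_W f] for the product ultrafilter
    [W = U' · U], whose limit is again a character of [CB(S)]. *)

Section Translates.
Variable S : HSTSemigroup.

Lemma Tmu_Tmu_ulim U U' rho f :
  is_ultrafilter S U -> is_ultrafilter S U' ->
  (forall h, CB S h -> tends S U' h (rho h)) -> Lmc S f ->
  Tmu S rho (Tmu S (ulim U) f) = Tmu S (ulim (product_filter (smul S) U' U)) f.
Proof.
  intros HU HU' Hrho [Hf HTf].
  apply functional_extensionality; intros s.
  change (rho (Lshift S s (Tmu S (ulim U) f))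
          = ulim (product_filter (smul S) U' U) (Lshift S s f)).
  assert (HCB : CB S (Lshift S s (Tmu S (ulim U) f)))
    by (apply CB_Lshift, HTf, ulim_betaS; exact HU).
  rewrite <- (ulim_eq U' _ _ HU' (Hrho _ HCB)).
  destruct (CB_Lshift S s f Hf) as [_ [M HM]].
  rewrite <- (ulim_product (smul S) U' U _ M HU' HU HM).
  f_equal; apply functional_extensionality; intros a.
  unfold Lshift, Tmu; f_equal; apply functional_extensionality; intros t.
  rewrite smul_assoc; reflexivity.
Qed.

Lemma Tmu_Lmc A nu f : approximable S (Lmc S) A nu -> Lmc S f -> Lmc S (Tmu S nu f).
Proof.
  intros Happ Hf.
  destruct (approximable_ultralimit S _ _ _ Happ) as [U [HU HnuU]].
  assert (Hnu : Tmu S nu f = Tmu S (ulim U) f).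
  { apply functional_extensionality; intros s; unfold Tmu.
    symmetry; apply ulim_eq; auto; apply HnuU, Lmc_Lshift, Hf. }
  rewrite Hnu; split; [apply (proj2 Hf), ulim_betaS, HU|].
  intros rho Hrho.
  destruct (approximable_ultralimit S _ _ _ (betaS_approximable S rho Hrho)) as [U' [HU' HrhoU']].
  rewrite (Tmu_Tmu_ulim U U' rho f HU HU' HrhoU' Hf).
  apply (proj2 Hf), ulim_betaS, product_ultrafilter; auto.
Qed.
End Translates.

(** * Points of [S^*] in the closure of a sequence lie in the closure of its tails *)

Section Remainder.
Variable S : HSTSemigroup.

Lemma Sstar_separates_point nu p : Sstar S nu ->
  exists g, Lmc S g /\ 0 < Cnorm (nu g - g p)%C.
Proof.
  intros [_ Hnot_eval]; apply NNPP; intros Hno; apply (Hnot_eval p); intros g Hg.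
  apply Cnorm_dist_eq0, Rle_antisym; [|apply Cnorm_nonneg].
  apply Rnot_lt_le; intros Hpos; apply Hno; eauto.
Qed.

Lemma Sstar_separates_points nu ps : Sstar S nu ->
  exists gs d, 0 < d /\ (forall g, In g gs -> Lmc S g) /\
    forall p, In p ps -> exists g, In g gs /\ d <= Cnorm (nu g - g p)%C.
Proof.
  intros Hnu; induction ps as [|p ps IH].
  - exists nil, 1; split; [lra | simpl; tauto].
  - destruct IH as [gs [d [Hd [Hgs Hps]]]].
    destruct (Sstar_separates_point nu p Hnu) as [g [Hg Hgp]].
    exists (g :: gs), (Rmin d (Cnorm (nu g - g p)%C)); split; [|split].
    + apply Rmin_pos; auto.
    + simpl; intros h [<- | Hh]; auto.
    + simpl; intros p' [<- | Hp'].
      * exists g; split; [left; reflexivity | apply Rmin_r].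
      * destruct (Hps p' Hp') as [g' [Hin Hg'p']].
        exists g'; split; [right; exact Hin | eapply Rle_trans; [apply Rmin_l | exact Hg'p']].
Qed.

(** Evaluations at [x_n] with [n <= K] stay away from [nu], so the tail does the approximating. *)
Lemma Sstar_closure_tail (x : nat -> S) nu K : Sstar S nu ->
  in_cl_eps S (seq_range S x) nu ->
  in_cl_eps S (fun z => exists n, (K < n)%nat /\ z = x n) nu.
Proof.
  rewrite !in_cl_eps_approximable; intros Hnu Hcl fs eps Heps Hfs.
  destruct (Sstar_separates_points nu (map x (seq 0 (Datatypes.S K))) Hnu)
    as [gs [d [Hd [Hgs Hsep]]]].
  destruct (Hcl (fs ++ gs) (Rmin eps d)) as [a [[n ->] Ha]].
  - apply Rmin_pos; auto.
  - intros f Hf; apply in_app_or in Hf; destruct Hf; auto.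
  - exists (x n); split.
    + exists n; split; auto.
      apply Nat.nle_gt; intros Hn.
      assert (Hxn : In (x n) (map x (seq 0 (Datatypes.S K))))
        by (apply in_map, in_seq; lia).
      destruct (Hsep _ Hxn) as [g [Hg Hfar]].
      pose proof (Ha g (in_or_app _ _ _ (or_intror Hg))); pose proof (Rmin_r eps d); lra.
    + intros f Hf; eapply Rlt_le_trans; [apply Ha, in_or_app; left; exact Hf | apply Rmin_l].
Qed.
End Remainder.

Theorem lemma4p4 (S : HSTSemigroup) (x y : nat -> S)
  (hx : unbounded_seq S x) (hy : unbounded_seq S y)
  (mu nu : (S -> Cplx) -> Cplx)
  (hmu : Sstar S mu) (hnu : Sstar S nu)
  (hnux : in_cl_eps S (seq_range S x) nu)
  (hmuy : in_cl_eps S (seq_range S y) mu) :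
  in_cl_eps S (fun z => exists k n, (k < n)%nat /\ z = smul S (y k) (x n))
    (lmc_prod S mu nu).
Proof.
  intros fs eps Heps Hfs.
  destruct (hmuy (map (Tmu S nu) fs) (eps / 2)) as [b [[k ->] Hk]]; [lra| |].
  { intros g Hg; apply in_map_iff in Hg; destruct Hg as [f [<- Hf]].
    apply (Tmu_Lmc S (seq_range S x)); auto. }
  destruct (Sstar_closure_tail S x nu k hnu hnux (map (Lshift S (y k)) fs) (eps / 2))
    as [a [[n [Hkn ->]] Hn]]; [lra| |].
  { intros g Hg; apply in_map_iff in Hg; destruct Hg as [f [<- Hf]]; apply Lmc_Lshift; auto. }
  exists (smul S (y k) (x n)); split; [exists k, n; auto|].
  (* [mu (T_nu f) ≈ T_nu f (y k) = nu (L_{y k} f) ≈ f (y k · x n)]. *)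
  intros f Hf.
  specialize (Hk _ (in_map _ _ _ Hf)); specialize (Hn _ (in_map _ _ _ Hf)).
  change (Cnorm (mu (Tmu S nu f) - nu (Lshift S (y k) f))%C < eps / 2) in Hk.
  change (Cnorm (nu (Lshift S (y k) f) - f (smul S (y k) (x n)))%C < eps / 2) in Hn.
  change (Cnorm (mu (Tmu S nu f) - f (smul S (y k) (x n)))%C < eps).
  pose proof (Cnorm_dist_triangle (mu (Tmu S nu f)) (nu (Lshift S (y k) f))
                (f (smul S (y k) (x n)))).
  lra.
Qed.
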